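(* Let $a,b,d>0$, let $c_{-}$ be the unique negative zero of $Q(x)=4ax^3-b^2x^2-18abd\,x+27a^2d^2+4db^3$, let $c^{*}=-\sqrt{3bd}$, and suppose $c\in(c_{-},c^{*})$. Let $\phi(x)=\frac{ax^3+bx^2+cx+d}{x^3}$ ($x>0$) and $P(t)=t^4-at^3-bt^2-ct-d$, $t>0$. Let $c_b$ be the unique negative root of the quadratic polynomial $H(x)=108x^2+(108ab+27a^3)x-9a^2b^2-32b^3$. \begin{description} \item[(a)] If $c=c_b$ then $P'$ touches the horizontal axis (i.e. $P'(t^* )=P''(t^* )=0$) at $t^{*}=-\frac{6c_{b}+ab}{3a^2+8b}$, and $t^*>0$. \item[(b)] If $c_{b}\geq \frac{b^2-12d}{3a}$ then $\phi$ has a unique positive equilibrium for all $c\in(c_{-},c^{*})$. \item[(c)] If $c_{b}<\frac{b^2-12d}{3a}$ then, as the parameter $c$ increases from $c_b$ (with $a,b,d$ fixed), $P$ touches the horizontal axis first at a local minimum point $t_m$ of $P$ and next at a local maximum point $t_M$ of $P$, with $0<t_M<t_m$. Let $c_m$ and $c_M$ be the values of the parameter $c$ corresponding to $t_m$ and $t_M$ respectively. Then $$c_{b}<c_{m}<c_{M}<c^{*},\qquad c_{-}<c_{M}.$$ Moreover: \begin{description} \item[(c1)] If $c_{-}\leq c_{m}$: for $c\in(c_m,c_M)$, $\phi$ has three positive equilibria. For $c=c_m$, $\phi$ has two positive equilibria, one of which is $t_m$; the graph of $\phi$ is tangent to the line $y=x$ at $t_m$, and $t_m$ is greater than the other equilibrium.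 For $c=c_M$, $\phi$ has two positive equilibria, one of which is $t_M$; the graph of $\phi$ is tangent to the line $y=x$ at $t_M$, and $t_M$ is lower than the other equilibrium. For $c\in(c_{-},c_m)\cup(c_M,c^{*})$, $\phi$ has a unique positive equilibrium. \item[(c2)] If $c_m<c_{-}$: for $c\in(c_{-},c_M)$, $\phi$ has three positive equilibria. For $c=c_M$, $\phi$ has two positive equilibria, one of which is $t_M$; the graph of $\phi$ is tangent to the line $y=x$ at $t_M$, and $t_M$ is lower than the other equilibrium. For $c\in(c_M,c^{*})$, $\phi$ has a unique positive equilibrium. \end{description} \end{description}
   Context: $\phi$ is the right-hand side of the difference equation $x_{n+1}=\frac{ax_n^3+bx_n^2+cx_n+d}{x_n^3}$. An equilibrium of $\phi$ is a point $t>0$ with $\phi(t)=t$; these are exactly the positive roots of $P$. ''$P$ touches the horizontal axis at $t_0$'' means $t_0$ is a root of $P$ with $P'(t_0)=0$ (a double root). *)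

From HB Require Import structures.
From mathcomp Require Import all_boot all_order all_algebra.
From mathcomp Require Import all_classical all_reals all_analysis.
Set Implicit Arguments. Unset Strict Implicit. Unset Printing Implicit Defensive.
Import Order.TTheory GRing.Theory Num.Theory.
Import numFieldNormedType.Exports.
Local Open Scope ring_scope.

Section Defs.
Variable R : realType.

Definition phi (a b c d : R) (x : R) : R :=
  (a * x ^+ 3 + b * x ^+ 2 + c * x + d) / x ^+ 3.

Definition Ppoly (a b c d : R) : {poly R} :=
  'X^4 - a%:P * 'X^3 - b%:P * 'X^2 - c%:P * 'X - d%:P.

Definition Qf (a b d x : R) : R :=
  4 * a * x ^+ 3 - b ^+ 2 * x ^+ 2 - 18 * a * b * d * x
  + 27 * a ^+ 2 * d ^+ 2 + 4 * d * b ^+ 3.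

Definition Hf (a b x : R) : R :=
  108 * x ^+ 2 + (108 * a * b + 27 * a ^+ 3) * x - 9 * a ^+ 2 * b ^+ 2 - 32 * b ^+ 3.

Definition cstar (b d : R) : R := - Num.sqrt (3 * b * d).

Definition equilibrium (a b c d t : R) : Prop := 0 < t /\ phi a b c d t = t.

Definition n_equilibria (a b c d : R) (n : nat) : Prop :=
  exists s : seq R, [/\ uniq s, size s = n &
    forall t, t \in s <-> equilibrium a b c d t].

Definition touches (p : {poly R}) (t : R) : Prop :=
  p.[t] = 0 /\ (p^`()).[t] = 0.

Definition local_min_pt (f : R -> R) (t : R) : Prop :=
  exists e : R, 0 < e /\ forall x, `|x - t| < e -> f t <= f x.

Definition local_max_pt (f : R -> R) (t : R) : Prop :=
  exists e : R, 0 < e /\ forall x, `|x - t| < e -> f x <= f t.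

Definition tangent_to_diag (f : R -> R) (t : R) : Prop :=
  f t = t /\ is_derive t 1 f 1.

End Defs.

From HB Require Import structures.
From mathcomp Require Import all_boot all_order all_algebra.
From mathcomp Require Import all_classical all_reals all_analysis.
From mathcomp Require Import ring lra.
Set Implicit Arguments. Unset Strict Implicit. Unset Printing Implicit Defensive.
Import Order.TTheory GRing.Theory Num.Theory.
Import numFieldNormedType.Exports.
Local Open Scope ring_scope.

(* Since [P(t) = t (ceq t - c)] with [ceq t = t^3 - a t^2 - b t - d / t], the positive
   equilibria for the parameter [c] are the solutions of [ceq t = c] on [t > 0].
   Now [t^2 ceq'(t) = slope t = 3 t^4 - 2 a t^3 - b t^2 + d] and [slope'(t) = t P''(t)],
   so [slope] decreases, then increases, with its minimum at the positive root [t*] of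
   [P'']; moreover [12 slope t* = 3 a c_b - (b^2 - 12 d)], where [c_b] is the value of [c]
   for which [t*] is a double root of [P'].  If [slope t* >= 0], [ceq] is increasing and
   each [c] has one equilibrium.  Otherwise [slope] vanishes at [t_M < t* < t_m], [ceq]
   increases, decreases and increases again, and counting the solutions of [ceq t = c]
   against its local extrema [c_M = ceq t_M] and [c_m = ceq t_m] gives (c1) and (c2).
   At a zero [t] of [slope], [c = ceq t] is also [4 t^3 - 3 a t^2 - 2 b t], the value of
   [c] at which [P] touches the axis at [t]; the comparisons of [c_m], [c_M] with [c_b],
   [c^*] and [c_-] reduce to polynomial identities in [t]. *)

Section RealFunctions.
Variable R : realType.

Lemma is_derive_gt0_homo (f f' : R -> R) (u v : R) :
  (forall x, u <= x <= v -> is_derive x 1 f (f' x)) ->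
  (forall x, u < x < v -> 0 < f' x) ->
  {in `[u, v] &, {homo f : x y / x < y}}.
Proof.
move=> df f'_gt0; apply: gtr0_derive1_lt_cc.
- by move=> x; rewrite in_itv /= => /andP[ux xv]; have [] := df x; rewrite ?ltW.
- move=> x; rewrite in_itv /= => /andP[ux xv].
  have [|_ Df] := df x; first by rewrite !ltW.
  by rewrite derive1E Df f'_gt0 ?ux.
- by apply: derivable_within_continuous => x; rewrite in_itv /= => /df [].
Qed.

Lemma is_derive_lt0_nhomo (f f' : R -> R) (u v : R) :
  (forall x, u <= x <= v -> is_derive x 1 f (f' x)) ->
  (forall x, u < x < v -> f' x < 0) ->
  {in `[u, v] &, {homo f : x y /~ x < y}}.
Proof.
move=> df f'_lt0 x y xuv yuv xy; rewrite -ltrN2.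
apply: (@is_derive_gt0_homo (fun z => - f z) (fun z => - f' z) u v) => //.
  by move=> z /df /is_deriveN.
by move=> z /f'_lt0; rewrite oppr_gt0.
Qed.

Lemma is_derive_inv (x : R) : x != 0 -> is_derive x 1 GRing.inv (- x ^- 2).
Proof. by move=> x_neq0; apply: is_derive_eq; [exact: (@is_deriveV _ id) | exact: mulr1]. Qed.

Lemma derivable_ivt (f : R -> R) (u v c : R) : u <= v ->
  (forall x, u <= x <= v -> derivable f x 1) ->
  (f u <= c <= f v) \/ (f v <= c <= f u) ->
  exists2 x, u <= x <= v & f x = c.
Proof.
move=> uv df fc; have [x] : exists2 x, x \in `[u, v] & f x = c.
  apply: IVT => //; first by apply: derivable_within_continuous => x; rewrite in_itv /=; exact: df.
  by case: fc => /andP[? ?]; rewrite ge_min le_max; apply/andP; split; apply/orP; auto.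
by rewrite in_itv /=; exists x.
Qed.

End RealFunctions.

Section Equilibria.
Variables (R : realType) (a b d : R).
Hypotheses (a_gt0 : 0 < a) (b_gt0 : 0 < b) (d_gt0 : 0 < d).

(* [ceq t] and [crit t] are the values of [c] for which [t] is a root, resp. a critical
   point, of [P]; [slope t = t^2 ceq'(t)] and [curv t = P''(t) / 2]. *)
Definition ceq (t : R) := t ^+ 3 - a * t ^+ 2 - b * t - d / t.
Definition crit (t : R) := 4 * t ^+ 3 - 3 * a * t ^+ 2 - 2 * b * t.
Definition slope (t : R) := 3 * t ^+ 4 - 2 * a * t ^+ 3 - b * t ^+ 2 + d.
Definition curv (t : R) := 6 * t ^+ 2 - 3 * a * t - b.

Lemma Ppoly_hornerE (c t : R) : t != 0 -> (Ppoly a b c d).[t] = t * (ceq t - c).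
Proof. by move=> t0; rewrite /Ppoly /ceq !hornerE /=; field. Qed.

Lemma Ppoly_deriv_hornerE (c t : R) : ((Ppoly a b c d)^`()).[t] = crit t - c.
Proof. by rewrite /Ppoly /crit !poly.derivE !hornerE /=; ring. Qed.

Lemma Ppoly_deriv2_hornerE (c t : R) : ((Ppoly a b c d)^`(2)).[t] = 2 * curv t.
Proof. by rewrite /Ppoly /curv !derivnS derivn0 !poly.derivE !hornerE /=; ring. Qed.

Lemma is_derive_ceq (t : R) : 0 < t -> is_derive t 1 ceq (slope t / t ^+ 2).
Proof.
move=> t_gt0; have t_neq0 : t != 0 by rewrite gt_eqF.
set p : {poly R} := 'X^3 - a%:P * 'X^2 - b%:P * 'X.
have Dceq := is_deriveB (is_derive_poly p t) (is_deriveZ d (is_derive_inv t_neq0)).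
have -> : ceq = horner p - d \*: GRing.inv.
  by apply/funext => y; rewrite /ceq !fctE !hornerE.
apply: is_derive_eq; rewrite /slope !poly.derivE !hornerE /=.
by rewrite -[d *: _]/(d * _); field.
Qed.

Lemma is_derive_slope (t : R) : is_derive t 1 slope (2 * t * curv t).
Proof.
have -> : slope = horner (3%:P * 'X^4 - (2 * a)%:P * 'X^3 - b%:P * 'X^2 + d%:P).
  by apply/funext => y; rewrite /slope !hornerE.
by apply: is_derive_eq; rewrite /curv !poly.derivE !hornerE /=; ring.
Qed.

Lemma slopeE (t : R) : t != 0 -> slope t = t * (crit t - ceq t).
Proof. by move=> t_neq0; rewrite /crit /ceq /slope; field. Qed.

Lemma ceq_crit (t : R) : 0 < t -> slope t = 0 -> ceq t = crit t.
Proof.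
move=> t_gt0; rewrite slopeE ?lt0r_neq0 // => /eqP.
by rewrite mulf_eq0 gt_eqF //= subr_eq0 eq_sym => /eqP.
Qed.

Lemma slope_eq0_dE (t : R) : slope t = 0 -> d = - 3 * t ^+ 4 + 2 * a * t ^+ 3 + b * t ^+ 2.
Proof. by rewrite /slope => /eqP; rewrite addrC addr_eq0 => /eqP ->; ring. Qed.

Lemma phi_eqE (c t : R) : t != 0 -> (phi a b c d t == t) = (ceq t == c).
Proof.
move=> t_neq0; have phiE : phi a b c d t - t = (c - ceq t) / t ^+ 2.
  by rewrite /phi /ceq; field.
rewrite -subr_eq0 phiE mulf_eq0 invr_eq0 expf_eq0 (negbTE t_neq0) andbF orbF.
by rewrite subr_eq0 eq_sym.
Qed.

Lemma equilibriumE (c t : R) : equilibrium a b c d t <-> 0 < t /\ ceq t = c.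
Proof.
split=> -[t_gt0 /eqP e]; split=> //; apply/eqP.
  by rewrite -phi_eqE // lt0r_neq0.
by rewrite phi_eqE // lt0r_neq0.
Qed.

Lemma touchesP (c t : R) : 0 < t ->
  touches (Ppoly a b c d) t <-> slope t = 0 /\ c = crit t.
Proof.
move=> t_gt0; have t_neq0 : t != 0 by rewrite gt_eqF.
rewrite /touches Ppoly_hornerE // Ppoly_deriv_hornerE; split.
  case=> /eqP; rewrite mulf_eq0 (negbTE t_neq0) subr_eq0 => /eqP ceqE /eqP.
  rewrite subr_eq0 => /eqP critE; split=> //.
  by rewrite slopeE // ceqE critE subrr mulr0.
by case=> slope0 ->; rewrite ceq_crit // !subrr mulr0.
Qed.

Lemma tangent_to_diag_crit (t : R) : 0 < t -> slope t = 0 ->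
  tangent_to_diag (phi a b (crit t) d) t.
Proof.
move=> t_gt0 slope0; have t_neq0 : t != 0 by rewrite gt_eqF.
split; first by have [] : equilibrium a b (crit t) d t by apply/equilibriumE; rewrite ceq_crit.
set p : {poly R} := a%:P * 'X^3 + b%:P * 'X^2 + (crit t)%:P * 'X + d%:P.
have Dphi := is_deriveM (is_derive_poly p t) (is_deriveX 3 (is_derive_inv t_neq0)).
have -> : phi a b (crit t) d = horner p * GRing.inv ^+ 3.
  apply/funext => y; rewrite !fctE /phi /p !hornerE /=.
  by have [->|y_neq0] := eqVneq y 0; [rewrite expr0n /= invr0 !(mulr0, mul0r) | field].
apply: (is_derive_eq Dphi); rewrite /p !poly.derivE !hornerE /= /crit !fctE.
by rewrite -![_ *: _]/(_ * _) (slope_eq0_dE slope0); field.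
Qed.

Lemma n_equilibriaP (c : R) (l : seq R) : uniq l ->
  (forall t, t \in l <-> 0 < t /\ ceq t = c) -> n_equilibria a b c d (size l).
Proof.
move=> l_uniq lE; exists l; split=> // t.
by rewrite lE; split=> /equilibriumE.
Qed.

Lemma ceq_lt_near0 (c w : R) : 0 < w -> exists2 x, 0 < x <= w & ceq x < c.
Proof.
move=> w_gt0; set x := Num.min (Num.min w 1) (d / (`|c| + 1)).
have x_gt0 : 0 < x by rewrite !lt_min w_gt0 ltr01 divr_gt0 // ltr_wpDl.
have x_le1 : x <= 1 by rewrite !ge_min lexx orbT.
have xc_le_d : x * (`|c| + 1) <= d.
  by rewrite -ler_pdivlMr ?ltr_wpDl // ge_min lexx orbT.
exists x; first by rewrite x_gt0 !ge_min lexx.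
rewrite -(ltr_pM2l x_gt0) -subr_gt0.
have -> : x * c - x * ceq x = x * c - x ^+ 4 + a * x ^+ 3 + b * x ^+ 2 + d.
  by rewrite /ceq; field; rewrite gt_eqF.
have x4_le_x : x ^+ 4 <= x by rewrite -[leRHS]expr1 ler_wiXn2l // ltW.
have ax3_gt0 : 0 < a * x ^+ 3 by rewrite mulr_gt0 // exprn_gt0.
have bx2_gt0 : 0 < b * x ^+ 2 by rewrite mulr_gt0 // exprn_gt0.
have xc_le : - (x * c) <= x * `|c| by rewrite -mulrN ler_pM2l // -normrN ler_norm.
lra.
Qed.

Lemma ceq_gt_large (c w : R) : exists2 x, w <= x & c < ceq x.
Proof.
set x := Num.max (Num.max w 1) (a + b + d + `|c| + 1).
have x_ge1 : 1 <= x by rewrite !le_max lexx orbT.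
have x_gt0 : 0 < x by apply: lt_le_trans x_ge1.
have x_ge : a + b + d + `|c| + 1 <= x by rewrite le_max lexx orbT.
exists x; first by rewrite !le_max lexx.
rewrite -(ltr_pM2l x_gt0) -subr_gt0.
have -> : x * ceq x - x * c =
    x ^+ 3 * (x - a - b - d) + b * (x ^+ 3 - x ^+ 2) + d * (x ^+ 3 - 1) - x * c.
  by rewrite /ceq; field; rewrite gt_eqF.
have x3_ge_x : x <= x ^+ 3 by rewrite ler_eXnr.
have x3_ge_x2 : x ^+ 2 <= x ^+ 3 by rewrite ler_weXn2l.
have x3_ge1 : 1 <= x ^+ 3 by rewrite exprn_ege1.
have x3_big : x ^+ 3 * (`|c| + 1) <= x ^+ 3 * (x - a - b - d).
  by rewrite ler_pM2l ?exprn_gt0 //; have := b_gt0; have := d_gt0; lra.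
have xc_le : x * c <= x * `|c| by rewrite ler_pM2l // ler_norm.
have bx : 0 <= b * (x ^+ 3 - x ^+ 2) by rewrite mulr_ge0 ?subr_ge0 // ltW.
have dx : 0 <= d * (x ^+ 3 - 1) by rewrite mulr_ge0 ?subr_ge0 // ltW.
have x3c : x * `|c| <= x ^+ 3 * `|c| by rewrite ler_wpM2r.
lra.
Qed.

Lemma ceq_ivt (c u v : R) : 0 < u -> u <= v ->
  (ceq u <= c <= ceq v) \/ (ceq v <= c <= ceq u) ->
  exists2 r, u <= r <= v & ceq r = c.
Proof.
move=> u_gt0 uv; apply: (derivable_ivt uv) => x /andP[ux _].
by have [] := is_derive_ceq (lt_le_trans u_gt0 ux).
Qed.

Lemma ceq_homo (u v : R) : 0 < u -> (forall x, u < x < v -> 0 < slope x) ->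
  {in `[u, v] &, {homo ceq : x y / x < y}}.
Proof.
move=> u_gt0 slope_gt0.
have Dceq x : u <= x <= v -> is_derive x 1 ceq (slope x / x ^+ 2).
  by case/andP=> ux _; apply: is_derive_ceq; apply: lt_le_trans ux.
apply: (is_derive_gt0_homo Dceq) => x /andP[ux xv].
rewrite divr_gt0 ?slope_gt0 ?ux //.
by rewrite exprn_gt0 // (lt_trans u_gt0).
Qed.

Lemma ceq_nhomo (u v : R) : 0 < u -> (forall x, u < x < v -> slope x < 0) ->
  {in `[u, v] &, {homo ceq : x y /~ x < y}}.
Proof.
move=> u_gt0 slope_lt0.
have Dceq x : u <= x <= v -> is_derive x 1 ceq (slope x / x ^+ 2).
  by case/andP=> ux _; apply: is_derive_ceq; apply: lt_le_trans ux.
apply: (is_derive_lt0_nhomo Dceq) => x /andP[ux xv].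
rewrite pmulr_llt0 ?slope_lt0 ?ux //.
by rewrite invr_gt0 exprn_gt0 // (lt_trans u_gt0).
Qed.

Lemma Qf_root_lt (x y : R) :
  Qf a b d y = 0 -> y < 0 -> x < 0 -> 0 < Qf a b d x -> y < x.
Proof.
move=> Qy0 y_lt0 x_lt0 Qx_gt0.
set beta := 4 * a * y ^+ 2 - b ^+ 2 * y - 18 * a * b * d.
have QfB z : Qf a b d z - Qf a b d y =
    (z - y) * (4 * a * z ^+ 2 + (4 * a * y - b ^+ 2) * z + beta).
  by rewrite /Qf /beta; ring.
have beta_gt0 : 0 < beta.
  have Q0E : Qf a b d 0 = - y * beta.
    by rewrite -(subr0 (Qf a b d 0)) -[X in _ - X]Qy0 QfB; ring.
  have : 0 < Qf a b d 0.
    have -> : Qf a b d 0 = 27 * (a * d) ^+ 2 + 4 * d * b ^+ 3 by rewrite /Qf; ring.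
    by rewrite addr_gt0 ?mulr_gt0 ?exprn_gt0.
  by rewrite Q0E pmulr_rgt0 // oppr_gt0.
have quad_gt0 : 0 < 4 * a * x ^+ 2 + (4 * a * y - b ^+ 2) * x + beta.
  have ay_lt0 : 4 * a * y - b ^+ 2 < 0.
    have : 4 * a * y < 0 by rewrite pmulr_rlt0 // mulr_gt0.
    by have := exprn_gt0 2 b_gt0; lra.
  have : 0 < (4 * a * y - b ^+ 2) * x by rewrite nmulr_lgt0.
  have : 0 <= 4 * a * x ^+ 2 by rewrite mulr_ge0 ?sqr_ge0 // mulr_ge0 // ltW.
  lra.
move: Qx_gt0; rewrite -(subr0 (Qf a b d x)) -[X in _ - X]Qy0 QfB.
by rewrite pmulr_lgt0 // subr_gt0.
Qed.

Lemma Qf_crit_gt0 (t : R) :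
  0 < t -> slope t = 0 -> curv t < 0 -> 0 < Qf a b d (crit t).
Proof.
move=> t_gt0 slope0; set u := 3 * a * t + b - 6 * t ^+ 2.
have -> : curv t = - u by rewrite /curv /u; ring.
rewrite oppr_lt0 => u_gt0.
(* after eliminating [d] with [slope t = 0], every coefficient is positive *)
have -> : Qf a b d (crit t) = t ^+ 4 * (t ^+ 4 * ((27 * a - 88 * t) ^+ 2 + 32 * t ^+ 2) / 27
    + u * t ^+ 2 * (96 * t ^+ 2 + 32 * u + 24 * b) + 4 * u ^+ 3).
  by rewrite /Qf (slope_eq0_dE slope0) /u /crit; field.
clearbody u; have t2_gt0 : 0 < t ^+ 2 by rewrite exprn_gt0.
have p1 : 0 <= t ^+ 4 * ((27 * a - 88 * t) ^+ 2 + 32 * t ^+ 2) / 27.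
  apply: divr_ge0 => //; apply: mulr_ge0; first by rewrite exprn_ge0 // ltW.
  by rewrite addr_ge0 ?sqr_ge0 // mulr_ge0 // ltW.
have p2 : 0 <= u * t ^+ 2 * (96 * t ^+ 2 + 32 * u + 24 * b).
  by rewrite mulr_ge0 ?mulr_ge0 ?ltW //; have := b_gt0; lra.
have p3 : 0 < 4 * u ^+ 3 by rewrite mulr_gt0 // exprn_gt0.
by rewrite pmulr_rgt0 ?exprn_gt0 //; lra.
Qed.

Lemma crit_lt_cstar (t : R) :
  0 < t -> slope t = 0 -> curv t < 0 -> crit t < cstar b d.
Proof.
move=> t_gt0 slope0 curv_lt0.
have crit_lt0 : crit t < 0.
  have -> : crit t = - t * (2 * b + 3 * a * t - 4 * t ^+ 2) by rewrite /crit; ring.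
  rewrite mulNr oppr_lt0 mulr_gt0 //.
  have : 0 < a * t by rewrite mulr_gt0.
  by move: curv_lt0; rewrite /curv; have := b_gt0; lra.
have crit2_gt : 3 * b * d < crit t ^+ 2.
  rewrite (slope_eq0_dE slope0) -subr_gt0.
  have -> : crit t ^+ 2 - 3 * b * (- 3 * t ^+ 4 + 2 * a * t ^+ 3 + b * t ^+ 2)
      = t ^+ 2 * ((b + 3 * a * t - 4 * t ^+ 2) ^+ 2 + b * t ^+ 2) by rewrite /crit; ring.
  by rewrite mulr_gt0 ?exprn_gt0 // ltr_wpDl ?sqr_ge0 // mulr_gt0 // exprn_gt0.
have -> : crit t = - Num.sqrt (crit t ^+ 2) by rewrite sqrtr_sqr ltr0_norm ?opprK.
by rewrite /cstar ltrN2 ltr_sqrt // (lt_trans _ crit2_gt) // !mulr_gt0.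
Qed.

Lemma Hf_neg_root_unique (x y : R) :
  Hf a b x = 0 -> Hf a b y = 0 -> x < 0 -> y < 0 -> x = y.
Proof.
move=> Hx Hy x_lt0 y_lt0; apply/eqP; rewrite -subr_eq0; apply/negPn/negP => xy_neq0.
set B := 108 * a * b + 27 * a ^+ 3.
have : (x - y) * (108 * (x + y) + B) = Hf a b x - Hf a b y by rewrite /Hf /B; ring.
rewrite Hx Hy subrr => /eqP; rewrite mulf_eq0 (negbTE xy_neq0) /= => /eqP sum0.
have : Hf a b x = x * (108 * (x + y) + B) - 108 * (x * y) - 9 * (a * b) ^+ 2 - 32 * b ^+ 3.
  by rewrite /Hf /B; ring.
rewrite Hx sum0 mulr0 => HxE.
have : 0 < x * y by rewrite nmulr_rgt0.
have := exprn_gt0 2 (mulr_gt0 a_gt0 b_gt0); have := exprn_gt0 3 b_gt0; lra.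
Qed.

Lemma slope_crit_curv (t : R) :
  12 * (slope t - d) + b ^+ 2 - 3 * a * crit t = curv t ^+ 2.
Proof. by rewrite /slope /crit /curv; ring. Qed.

Definition tstar := (3 * a + Num.sqrt (9 * a ^+ 2 + 24 * b)) / 12.

Lemma tstar_gt0 : 0 < tstar.
Proof. by rewrite divr_gt0 // ltr_wpDr ?sqrtr_ge0 // mulr_gt0. Qed.

Lemma curv_tstar : curv tstar = 0.
Proof.
have r2 : Num.sqrt (9 * a ^+ 2 + 24 * b) ^+ 2 = 9 * a ^+ 2 + 24 * b.
  by rewrite sqr_sqrtr // addr_ge0 // mulr_ge0 // ?sqr_ge0 // ltW.
have -> : curv tstar = (Num.sqrt (9 * a ^+ 2 + 24 * b) ^+ 2 - (9 * a ^+ 2 + 24 * b)) / 24.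
  by rewrite /curv /tstar; field.
by rewrite r2 subrr mul0r.
Qed.

Let crit_curvE : crit tstar =
  (2 * tstar / 3 - a / 6) * curv tstar - (tstar * (3 * a ^+ 2 + 8 * b) + a * b) / 6.
Proof. by rewrite /crit /curv; field. Qed.

Lemma tstarE : tstar = - (6 * crit tstar + a * b) / (3 * a ^+ 2 + 8 * b).
Proof.
have D_gt0 : 0 < 3 * a ^+ 2 + 8 * b by rewrite addr_gt0 ?mulr_gt0 ?exprn_gt0.
by rewrite crit_curvE curv_tstar mulr0; field; rewrite gt_eqF.
Qed.

Lemma crit_tstar_lt0 : crit tstar < 0.
Proof.
have -> : crit tstar = - tstar * (a * tstar + 4 * b / 3) + 2 * tstar / 3 * curv tstar.
  by rewrite /crit /curv; field.
have s_gt0 := tstar_gt0.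
rewrite curv_tstar mulr0 addr0 mulNr oppr_lt0 mulr_gt0 //.
by have := mulr_gt0 a_gt0 s_gt0; have := b_gt0; lra.
Qed.

(* [Hf a b c] is [-1/4] times the discriminant of [P' = 4 t^3 - 3 a t^2 - 2 b t - c];
   its root [crit tstar] is the value of [c] at which [P'] has the double root [tstar]. *)
Lemma Hf_crit_tstar : Hf a b (crit tstar) = 0.
Proof.
have critE : crit tstar = - (tstar * (3 * a ^+ 2 + 8 * b) + a * b) / 6.
  by rewrite crit_curvE curv_tstar mulr0 sub0r mulNr.
have : 2 * Hf a b (crit tstar) = curv tstar * (3 * a ^+ 2 + 8 * b) ^+ 2.
  by rewrite critE /Hf /curv; field.
by rewrite curv_tstar mul0r => /eqP; rewrite mulf_eq0 pnatr_eq0 /= => /eqP.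
Qed.

Lemma curvE (t : R) : curv t = (t - tstar) * (6 * (t + tstar) - 3 * a).
Proof. by rewrite -[LHS]subr0 -curv_tstar /curv; ring. Qed.

Lemma half_a_lt_tstar : a < 2 * tstar.
Proof.
have e : tstar * (6 * tstar - 3 * a) = b.
  by apply/eqP; rewrite -subr_eq0 -curv_tstar /curv; apply/eqP; ring.
have : 0 < 6 * tstar - 3 * a by rewrite -(pmulr_rgt0 _ tstar_gt0) e.
lra.
Qed.

Lemma curv_lt0 (t : R) : 0 <= t -> t < tstar -> curv t < 0.
Proof.
move=> t_ge0 t_lt; rewrite curvE pmulr_llt0 ?subr_lt0 //.
by have := half_a_lt_tstar; lra.
Qed.

Lemma curv_gt0 (t : R) : tstar < t -> 0 < curv t.
Proof.
move=> t_gt; rewrite curvE mulr_gt0 ?subr_gt0 //.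
by have := half_a_lt_tstar; have := tstar_gt0; lra.
Qed.

Lemma slope_tstar_ge0 :
  (0 <= slope tstar) = ((b ^+ 2 - 12 * d) / (3 * a) <= crit tstar).
Proof.
have a3_gt0 : 0 < 3 * a by rewrite mulr_gt0.
have e := slope_crit_curv tstar.
have -> : slope tstar = (3 * a * crit tstar - (b ^+ 2 - 12 * d)) / 12.
  by move: e; rewrite curv_tstar expr0n /=; lra.
by rewrite pmulr_lge0 ?invr_gt0 // ler_pdivrMr // subr_ge0 [crit tstar * _]mulrC.
Qed.

Lemma slope_decr : {in `[0, tstar] &, {homo slope : x y /~ x < y}}.
Proof.
have Dslope x : 0 <= x <= tstar -> is_derive x 1 slope (2 * x * curv x).
  by move=> _; apply: is_derive_slope.
apply: (is_derive_lt0_nhomo Dslope) => x /andP[x_gt0 x_lt].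
by rewrite pmulr_rlt0 ?mulr_gt0 // curv_lt0 // ltW.
Qed.

Lemma slope_incr : {in `[tstar, +oo[ &, {homo slope : x y / x < y}}.
Proof.
move=> x y; rewrite !in_itv /= !andbT => sx sy xy.
have slope_homo : {in `[tstar, y] &, {homo slope : x y / x < y}}.
  have Dslope z : tstar <= z <= y -> is_derive z 1 slope (2 * z * curv z).
    by move=> _; apply: is_derive_slope.
  apply: (is_derive_gt0_homo Dslope) => z /andP[sz _].
  by rewrite mulr_gt0 ?curv_gt0 // mulr_gt0 // (lt_trans tstar_gt0).
by apply: slope_homo; rewrite // in_itv /= ?sx ?sy ?lexx ?(ltW xy).
Qed.

Lemma slope_tstar_lt (t : R) : 0 <= t -> t != tstar -> slope tstar < slope t.
Proof.
move=> t_ge0; rewrite neq_lt => /orP[ts|st].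
  by apply: slope_decr; rewrite // in_itv /= ?t_ge0 ?lexx ?(ltW ts) ?(ltW tstar_gt0).
by apply: slope_incr; rewrite // in_itv /= ?lexx ?(ltW st).
Qed.

Lemma crit_tstar_lt (t : R) : 0 < t -> t != tstar -> crit tstar < crit t.
Proof.
move=> t_gt0 t_neq; rewrite -subr_gt0.
have -> : crit t - crit tstar =
    (t - tstar) ^+ 2 * (4 * t + 8 * tstar - 3 * a) + 2 * (t - tstar) * curv tstar.
  by rewrite /crit /curv; ring.
rewrite curv_tstar mulr0 addr0 mulr_gt0 //.
  by rewrite exprn_even_gt0 //= subr_eq0.
by have := half_a_lt_tstar; have := tstar_gt0; lra.
Qed.

Lemma ceq_incr : 0 <= slope tstar -> {in `]0, +oo[ &, {homo ceq : x y / x < y}}.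
Proof.
move=> slope_ge0.
have incr u v : 0 < u -> v <= tstar \/ tstar <= u -> u < v -> ceq u < ceq v.
  move=> u_gt0 uv_side uv.
  have slope_gt0 z : u < z < v -> 0 < slope z.
    case/andP=> uz zv; apply: le_lt_trans slope_ge0 (slope_tstar_lt _ _).
      by rewrite ltW // (lt_trans u_gt0).
    by case: uv_side => h; [rewrite lt_eqF // (lt_le_trans zv h) | rewrite gt_eqF // (le_lt_trans h uz)].
  by apply: (ceq_homo u_gt0 slope_gt0); rewrite // in_itv /= lexx ltW.
move=> x y; rewrite !in_itv /= !andbT => x_gt0 y_gt0 xy.
have [ys|sy] := leP y tstar; first by apply: incr => //; left.
have [sx|xs] := leP tstar x; first by apply: incr => //; right.
apply: (lt_trans (incr x tstar x_gt0 (or_introl (lexx _)) xs)).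
exact: incr tstar y tstar_gt0 (or_intror (lexx _)) sy.
Qed.

Lemma one_equilibrium (c : R) : 0 <= slope tstar -> n_equilibria a b c d 1.
Proof.
move=> slope_ge0; have [x /andP[x_gt0 _] ceq_x] := ceq_lt_near0 c ltr01.
have [y xy ceq_y] := ceq_gt_large c x.
have [r /andP[xr _] ceq_r] : exists2 r, x <= r <= y & ceq r = c.
  by apply: ceq_ivt => //; left; rewrite !ltW.
have r_gt0 := lt_le_trans x_gt0 xr.
apply: (@n_equilibriaP c [:: r]) => // t; rewrite inE.
split=> [/eqP -> //|[t_gt0 ceq_t]]; apply/eqP.
apply: (inc_inj_in (le_mono_in (ceq_incr slope_ge0))); rewrite ?in_itv /= ?andbT //.
by rewrite ceq_t ceq_r.
Qed.

Lemma slope_root_lt_tstar : slope tstar < 0 -> exists2 t, 0 < t < tstar & slope t = 0.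
Proof.
move=> slope_lt0; have slope0 : slope 0 = d by rewrite /slope expr0n /=; ring.
have [t /andP[t_ge0 t_le] slope_t] : exists2 t, 0 <= t <= tstar & slope t = 0.
  apply: derivable_ivt; first exact: ltW tstar_gt0.
    by move=> x _; case: (is_derive_slope x).
  by right; rewrite slope0 !ltW.
have t_neq0 : t != 0 by apply: contraPneq slope_t => ->; rewrite slope0 => /eqP; rewrite gt_eqF.
have t_neqs : t != tstar by apply: contraPneq slope_t => ->; move/eqP; rewrite lt_eqF.
by exists t => //; rewrite !lt_neqAle t_ge0 t_le eq_sym t_neq0 t_neqs.
Qed.

Lemma slope_root_gt_tstar : slope tstar < 0 -> exists2 t, tstar < t & slope t = 0.
Proof.
move=> slope_lt0; have s_gt0 := tstar_gt0; have a0 := a_gt0; have b0 := b_gt0.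
set T := tstar + a + b + 1.
have T_gt1 : 1 < T by rewrite /T; lra.
have T_gt0 : 0 < T := lt_trans ltr01 T_gt1.
have slopeT : 0 < slope T.
  have -> : slope T = T ^+ 3 * (3 * T - 2 * a - b) + b * T ^+ 2 * (T - 1) + d.
    by rewrite /slope; ring.
  have : 0 < T ^+ 3 * (3 * T - 2 * a - b).
    by rewrite mulr_gt0 ?exprn_gt0 //; rewrite /T; lra.
  have : 0 <= b * T ^+ 2 * (T - 1) by rewrite !mulr_ge0 ?exprn_ge0 ?subr_ge0 ?ltW.
  by have := d_gt0; lra.
have [t /andP[st _] slope_t] : exists2 t, tstar <= t <= T & slope t = 0.
  apply: derivable_ivt; first by rewrite /T; lra.
    by move=> x _; case: (is_derive_slope x).
  by left; rewrite !ltW.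
exists t => //; rewrite lt_neqAle st andbT.
by apply: contraPneq slope_t => <-; move/eqP; rewrite lt_eqF.
Qed.

Section Fold.
Hypothesis slope_tstar_lt0 : slope tstar < 0.

Definition tM := xget 0 (fun t => 0 < t < tstar /\ slope t = 0).
Definition tm := xget 0 (fun t => tstar < t /\ slope t = 0).

Let tM_spec : 0 < tM < tstar /\ slope tM = 0.
Proof.
apply: (@xgetPex _ 0 (fun t => 0 < t < tstar /\ slope t = 0)).
by have [t ? ?] := slope_root_lt_tstar slope_tstar_lt0; exists t.
Qed.

Let tm_spec : tstar < tm /\ slope tm = 0.
Proof.
apply: (@xgetPex _ 0 (fun t => tstar < t /\ slope t = 0)).
by have [t ? ?] := slope_root_gt_tstar slope_tstar_lt0; exists t.
Qed.

Let tM_gt0 : 0 < tM. Proof. by case: tM_spec => /andP[]. Qed.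
Let tM_lt : tM < tstar. Proof. by case: tM_spec => /andP[]. Qed.
Let slope_tM : slope tM = 0. Proof. by case: tM_spec. Qed.
Let tm_gt : tstar < tm. Proof. by case: tm_spec. Qed.
Let slope_tm : slope tm = 0. Proof. by case: tm_spec. Qed.

Let tM_lt_tm : tM < tm := lt_trans tM_lt tm_gt.
Let tm_gt0 : 0 < tm := lt_trans tM_gt0 tM_lt_tm.

Let tM_in : tM \in `[0, tstar]. Proof. by rewrite in_itv /= !ltW. Qed.
Let tm_in : tm \in `[tstar, +oo[. Proof. by rewrite in_itv /= andbT ltW. Qed.

Lemma slope_gt0_lt_tM (t : R) : 0 <= t -> t < tM -> 0 < slope t.
Proof.
move=> t_ge0 t_lt; have t_in : t \in `[0, tstar].
  by rewrite in_itv /= t_ge0 ltW // (lt_trans t_lt).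
by rewrite -slope_tM; apply: slope_decr.
Qed.

Lemma slope_lt0_mid (t : R) : tM < t -> t < tm -> slope t < 0.
Proof.
move=> Mt t_lt; have [ts|st] := leP t tstar.
  have t_in : t \in `[0, tstar] by rewrite in_itv /= ts ltW // (lt_trans tM_gt0).
  by rewrite -slope_tM; apply: slope_decr.
have t_in : t \in `[tstar, +oo[ by rewrite in_itv /= andbT ltW.
by rewrite -slope_tm; apply: slope_incr.
Qed.

Lemma slope_gt0_gt_tm (t : R) : tm < t -> 0 < slope t.
Proof.
move=> mt; have t_in : t \in `[tstar, +oo[ by rewrite in_itv /= andbT ltW // (lt_trans tm_gt).
by rewrite -slope_tm; apply: slope_incr.
Qed.

Lemma slope_eq0 (t : R) : 0 < t -> slope t = 0 -> t = tM \/ t = tm.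
Proof.
move=> t_gt0 slope_t.
have [tM_t|t_tM|->] := ltgtP t tM; last by left.
  by move: (slope_gt0_lt_tM (ltW t_gt0) tM_t); rewrite slope_t ltxx.
have [tm_t|t_tm|->] := ltgtP t tm; last by right.
  by move: (slope_lt0_mid t_tM tm_t); rewrite slope_t ltxx.
by move: (slope_gt0_gt_tm t_tm); rewrite slope_t ltxx.
Qed.

Lemma ceq_incr_left : {in `]0, tM] &, {homo ceq : x y / x < y}}.
Proof.
move=> x y; rewrite !in_itv /= => /andP[x_gt0 _] /andP[_ y_le] xy.
have slope_gt0 z : x < z < tM -> 0 < slope z.
  by case/andP=> xz zM; rewrite slope_gt0_lt_tM // ltW // (lt_trans x_gt0).
apply: (ceq_homo x_gt0 slope_gt0) => //; rewrite in_itv /= ?lexx ?(ltW xy) //.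
exact: ltW (lt_le_trans xy y_le).
Qed.

Lemma ceq_decr_mid : {in `[tM, tm] &, {homo ceq : x y /~ x < y}}.
Proof. by apply: (ceq_nhomo tM_gt0) => z /andP[Mz zm]; apply: slope_lt0_mid. Qed.

Lemma ceq_incr_right : {in `[tm, +oo[ &, {homo ceq : x y / x < y}}.
Proof.
move=> x y; rewrite !in_itv /= !andbT => mx my xy.
have slope_gt0 z : x < z < y -> 0 < slope z.
  by case/andP=> xz _; rewrite slope_gt0_gt_tm // (le_lt_trans mx).
apply: (ceq_homo (lt_le_trans tm_gt0 mx) slope_gt0) => //.
  by rewrite in_itv /= lexx ltW.
by rewrite in_itv /= lexx ltW.
Qed.

Let tM_left : tM \in `]0, tM]. Proof. by rewrite in_itv /= tM_gt0 lexx. Qed.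
Let tM_mid : tM \in `[tM, tm]. Proof. by rewrite in_itv /= lexx ltW. Qed.
Let tm_mid : tm \in `[tM, tm]. Proof. by rewrite in_itv /= lexx ltW. Qed.
Let tm_right : tm \in `[tm, +oo[. Proof. by rewrite in_itv /= lexx. Qed.

Lemma ceq_lt_cM (t : R) : 0 < t -> t < tM -> ceq t < ceq tM.
Proof. by move=> t_gt0 t_lt; apply: ceq_incr_left; rewrite // in_itv /= t_gt0 ltW. Qed.

Lemma ceq_le_cM (t : R) : 0 < t -> t <= tm -> ceq t <= ceq tM.
Proof.
move=> t_gt0 t_le; have [t_lt|Mt|->] := ltgtP t tM; last by [].
  exact/ltW/ceq_lt_cM.
by apply/ltW/ceq_decr_mid; rewrite // in_itv /= t_le ltW.
Qed.

Lemma ceq_gt_cm (t : R) : tm < t -> ceq tm < ceq t.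
Proof. by move=> mt; apply: ceq_incr_right; rewrite // in_itv /= ltW. Qed.

Lemma ceq_ge_cm (t : R) : tM <= t -> ceq tm <= ceq t.
Proof.
move=> Mt; have [t_lt|mt|->] := ltgtP t tm; last by [].
  by apply/ltW/ceq_decr_mid; rewrite // in_itv /= Mt ltW.
exact/ltW/ceq_gt_cm.
Qed.

Lemma cm_lt_cM : ceq tm < ceq tM.
Proof. exact: ceq_decr_mid. Qed.

Lemma ceq_eq_left (x y : R) : 0 < x <= tM -> 0 < y <= tM -> ceq x = ceq y -> x = y.
Proof. by move=> x_in y_in; apply: (inc_inj_in (le_mono_in ceq_incr_left)). Qed.

Lemma ceq_eq_mid (x y : R) : tM <= x <= tm -> tM <= y <= tm -> ceq x = ceq y -> x = y.
Proof. by move=> x_in y_in; apply: (dec_inj_in (le_nmono_in ceq_decr_mid)). Qed.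

Lemma ceq_eq_right (x y : R) : tm <= x -> tm <= y -> ceq x = ceq y -> x = y.
Proof.
move=> mx my; apply: (inc_inj_in (le_mono_in ceq_incr_right));
  by rewrite in_itv /= andbT.
Qed.

Lemma ceq_root_left (c : R) : c < ceq tM -> exists2 r, 0 < r < tM & ceq r = c.
Proof.
move=> c_lt; have [x /andP[x_gt0 x_le] ceq_x] := ceq_lt_near0 c tM_gt0.
have [r /andP[xr r_le] ceq_r] : exists2 r, x <= r <= tM & ceq r = c.
  by apply: ceq_ivt => //; left; rewrite !ltW.
exists r => //; rewrite (lt_le_trans x_gt0) //= lt_neqAle r_le andbT.
by apply: contraTneq c_lt => rM; rewrite -ceq_r rM ltxx.
Qed.

Lemma ceq_root_mid (c : R) : ceq tm < c -> c < ceq tM -> exists2 r, tM < r < tm & ceq r = c.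
Proof.
move=> cm_lt c_lt.
have [r /andP[Mr rm] ceq_r] : exists2 r, tM <= r <= tm & ceq r = c.
  by apply: (ceq_ivt tM_gt0 (ltW tM_lt_tm)); right; rewrite !ltW.
exists r => //; rewrite !lt_neqAle Mr rm !andbT.
apply/andP; split; first by apply: contraTneq c_lt => ->; rewrite ceq_r ltxx.
by apply: contraTneq cm_lt => <-; rewrite ceq_r ltxx.
Qed.

Lemma ceq_root_right (c : R) : ceq tm < c -> exists2 r, tm < r & ceq r = c.
Proof.
move=> cm_lt; have [y my ceq_y] := ceq_gt_large c tm.
have [r /andP[mr _] ceq_r] : exists2 r, tm <= r <= y & ceq r = c.
  by apply: (ceq_ivt tm_gt0 my); left; rewrite !ltW.
exists r => //; rewrite lt_neqAle mr andbT.
by apply: contraTneq cm_lt => ->; rewrite ceq_r ltxx.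
Qed.

Lemma one_equilibrium_lt_cm (c : R) : c < ceq tm -> n_equilibria a b c d 1.
Proof.
move=> c_lt; have [r /andP[r_gt0 r_lt] ceq_r] := ceq_root_left (lt_trans c_lt cm_lt_cM).
apply: (@n_equilibriaP c [:: r]) => // t; rewrite inE.
split=> [/eqP -> //|[t_gt0 ceq_t]]; apply/eqP.
have [tM_le|Mt] := leP t tM.
  by apply: ceq_eq_left; rewrite ?t_gt0 ?r_gt0 ?tM_le ?(ltW r_lt) // ceq_t ceq_r.
by move: (ceq_ge_cm (ltW Mt)); rewrite ceq_t leNgt c_lt.
Qed.

Lemma one_equilibrium_gt_cM (c : R) : ceq tM < c -> n_equilibria a b c d 1.
Proof.
move=> c_gt; have [r mr ceq_r] := ceq_root_right (lt_trans cm_lt_cM c_gt).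
apply: (@n_equilibriaP c [:: r]) => // t; rewrite inE.
split=> [/eqP -> |[t_gt0 ceq_t]]; first by rewrite (lt_trans tm_gt0).
apply/eqP; have [t_le|mt] := leP t tm.
  by move: (ceq_le_cM t_gt0 t_le); rewrite ceq_t leNgt c_gt.
by apply: ceq_eq_right; rewrite ?ltW // ceq_t ceq_r.
Qed.

Lemma three_equilibria (c : R) : ceq tm < c < ceq tM -> n_equilibria a b c d 3.
Proof.
case/andP=> cm_lt c_lt.
have [r1 /andP[r1_gt0 r1_lt] ceq_r1] := ceq_root_left c_lt.
have [r2 /andP[r2_gt r2_lt] ceq_r2] := ceq_root_mid cm_lt c_lt.
have [r3 r3_gt ceq_r3] := ceq_root_right cm_lt.
apply: (@n_equilibriaP c [:: r1; r2; r3]).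
  by apply: lt_sorted_uniq; rewrite /= (lt_trans r1_lt r2_gt) (lt_trans r2_lt r3_gt).
move=> t; rewrite !inE; split.
  by case/or3P=> /eqP ->; rewrite ?(lt_trans tM_gt0 r2_gt) ?(lt_trans tm_gt0 r3_gt).
case=> t_gt0 ceq_t; have [tM_le|Mt] := leP t tM.
  by rewrite (@ceq_eq_left t r1) ?eqxx ?t_gt0 ?r1_gt0 ?tM_le ?(ltW r1_lt) // ceq_t ceq_r1.
have [t_le|mt] := leP t tm.
  by rewrite (@ceq_eq_mid t r2) ?eqxx ?orbT ?t_le ?(ltW Mt) ?(ltW r2_gt) ?(ltW r2_lt) // ceq_t ceq_r2.
by rewrite (@ceq_eq_right t r3) ?eqxx ?orbT ?(ltW mt) ?(ltW r3_gt) // ceq_t ceq_r3.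
Qed.

Lemma two_equilibria_cm : n_equilibria a b (ceq tm) d 2.
Proof.
have [r /andP[r_gt0 r_lt] ceq_r] := ceq_root_left cm_lt_cM.
apply: (@n_equilibriaP _ [:: r; tm]).
  by apply: lt_sorted_uniq; rewrite /= (lt_trans r_lt tM_lt_tm).
move=> t; rewrite !inE; split; first by case/orP=> /eqP ->.
case=> t_gt0 ceq_t; have [tM_le|Mt] := leP t tM.
  by rewrite (@ceq_eq_left t r) ?eqxx ?t_gt0 ?r_gt0 ?tM_le ?(ltW r_lt) // ceq_t ceq_r.
have [t_le|mt] := leP t tm.
  by rewrite (@ceq_eq_mid t tm) ?eqxx ?orbT ?t_le ?(ltW Mt) ?lexx ?(ltW tM_lt_tm).
by move: (ceq_gt_cm mt); rewrite ceq_t ltxx.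
Qed.

Lemma two_equilibria_cM : n_equilibria a b (ceq tM) d 2.
Proof.
have [r mr ceq_r] := ceq_root_right cm_lt_cM.
apply: (@n_equilibriaP _ [:: tM; r]).
  by apply: lt_sorted_uniq; rewrite /= (lt_trans tM_lt_tm mr).
move=> t; rewrite !inE; split; first by case/orP=> /eqP ->; rewrite ?(lt_trans tm_gt0 mr).
case=> t_gt0 ceq_t; have [t_lt|Mt] := ltP t tM.
  by move: (ceq_lt_cM t_gt0 t_lt); rewrite ceq_t ltxx.
have [t_le|mt] := leP t tm.
  by rewrite (@ceq_eq_mid t tM) ?eqxx ?t_le ?Mt ?lexx ?(ltW tM_lt_tm).
by rewrite (@ceq_eq_right t r) ?eqxx ?orbT ?(ltW mt) ?(ltW mr) // ceq_t ceq_r.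
Qed.

Lemma equilibrium_cm_le (t : R) : equilibrium a b (ceq tm) d t -> t <= tm.
Proof.
by case/equilibriumE=> _ ceq_t; rewrite leNgt; apply/negP => /ceq_gt_cm; rewrite ceq_t ltxx.
Qed.

Lemma equilibrium_cM_ge (t : R) : equilibrium a b (ceq tM) d t -> tM <= t.
Proof.
by case/equilibriumE=> t_gt0 ceq_t; rewrite leNgt; apply/negP => /(ceq_lt_cM t_gt0); rewrite ceq_t ltxx.
Qed.

Lemma crit_tstar_lt_cm : crit tstar < ceq tm.
Proof. by rewrite ceq_crit // crit_tstar_lt // gt_eqF. Qed.

Lemma cM_lt_cstar : ceq tM < cstar b d.
Proof. by rewrite ceq_crit //; apply: crit_lt_cstar => //; apply: curv_lt0 (ltW tM_gt0) tM_lt. Qed.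

Lemma Qf_root_lt_cM (y : R) : Qf a b d y = 0 -> y < 0 -> y < ceq tM.
Proof.
move=> Qy0 y_lt0; apply: Qf_root_lt => //.
  by apply: lt_le_trans cM_lt_cstar _; rewrite oppr_le0 sqrtr_ge0.
by rewrite ceq_crit //; apply: Qf_crit_gt0 => //; apply: curv_lt0 (ltW tM_gt0) tM_lt.
Qed.

Lemma touches_tm : touches (Ppoly a b (ceq tm) d) tm.
Proof. by apply/touchesP; rewrite // ceq_crit. Qed.

Lemma touches_tM : touches (Ppoly a b (ceq tM) d) tM.
Proof. by apply/touchesP; rewrite // ceq_crit. Qed.

Lemma touches_eq (c t : R) : 0 < t -> touches (Ppoly a b c d) t ->
  (c = ceq tm /\ t = tm) \/ (c = ceq tM /\ t = tM).
Proof.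
move=> t_gt0 /(touchesP _ t_gt0) [slope_t ->].
by case: (slope_eq0 t_gt0 slope_t) => ->; [right | left]; rewrite ceq_crit.
Qed.

Lemma local_min_tm : local_min_pt (fun x => (Ppoly a b (ceq tm) d).[x]) tm.
Proof.
exists (tm - tM); split=> [|x]; first by rewrite subr_gt0.
rewrite distrC => /(le_lt_trans (ler_norm _)) x_near.
have Mx : tM < x by lra.
have x_gt0 := lt_trans tM_gt0 Mx.
rewrite /= !Ppoly_hornerE ?gt_eqF // subrr mulr0.
by apply: mulr_ge0; [exact: ltW | rewrite subr_ge0 ceq_ge_cm // ltW].
Qed.

Lemma local_max_tM : local_max_pt (fun x => (Ppoly a b (ceq tM) d).[x]) tM.
Proof.
exists (Num.min tM (tm - tM)); split=> [|x]; first by rewrite lt_min tM_gt0 subr_gt0.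
rewrite lt_min => /andP[x_nearl x_nearr].
have := ler_norm (x - tM); have := ler_norm (tM - x); rewrite distrC => ? ?.
have x_gt0 : 0 < x by lra.
have x_le : x <= tm by lra.
rewrite /= !Ppoly_hornerE ?gt_eqF // subrr mulr0.
by apply: mulr_ge0_le0; [exact: ltW | rewrite subr_le0 ceq_le_cM].
Qed.

Lemma tangent_to_diag_tm : tangent_to_diag (phi a b (ceq tm) d) tm.
Proof. by rewrite (ceq_crit tm_gt0 slope_tm); apply: tangent_to_diag_crit. Qed.

Lemma tangent_to_diag_tM : tangent_to_diag (phi a b (ceq tM) d) tM.
Proof. by rewrite (ceq_crit tM_gt0 slope_tM); apply: tangent_to_diag_crit. Qed.

Lemma tM_gt0_lt_tm : 0 < tM < tm.
Proof. by rewrite tM_gt0. Qed.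

Lemma equilibria_at_cm :
  n_equilibria a b (ceq tm) d 2 /\ equilibrium a b (ceq tm) d tm /\
  tangent_to_diag (phi a b (ceq tm) d) tm /\
  (forall t, equilibrium a b (ceq tm) d t -> t <= tm).
Proof.
split; first exact: two_equilibria_cm.
split; first by apply/equilibriumE.
by split; [exact: tangent_to_diag_tm | exact: equilibrium_cm_le].
Qed.

Lemma equilibria_at_cM :
  n_equilibria a b (ceq tM) d 2 /\ equilibrium a b (ceq tM) d tM /\
  tangent_to_diag (phi a b (ceq tM) d) tM /\
  (forall t, equilibrium a b (ceq tM) d t -> tM <= t).
Proof.
split; first exact: two_equilibria_cM.
split; first by apply/equilibriumE.
by split; [exact: tangent_to_diag_tM | exact: equilibrium_cM_ge].
Qed.

End Fold.

End Equilibria.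

Theorem theorem2 (R : realType) (a b d cminus cb : R) :
  0 < a -> 0 < b -> 0 < d ->
  (* c_- : the (unique) negative zero of Q *)
  Qf a b d cminus = 0 -> cminus < 0 ->
  (* c_b : the (unique) negative root of H *)
  Hf a b cb = 0 -> cb < 0 ->
  (* (a) *)
  (forall c : R, cminus < c < cstar b d -> c = cb ->
     let ts := - (6 * cb + a * b) / (3 * a ^+ 2 + 8 * b) in
     [/\ ((Ppoly a b c d)^`()).[ts] = 0,
         ((Ppoly a b c d)^`(2)).[ts] = 0 & 0 < ts]) /\
  (* (b) *)
  ((b ^+ 2 - 12 * d) / (3 * a) <= cb ->
     forall c : R, cminus < c < cstar b d -> n_equilibria a b c d 1) /\
  (* (c) *)
  (cb < (b ^+ 2 - 12 * d) / (3 * a) ->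
     exists cm cM tm tM : R,
       [/\ cb < cm, cm < cM, cM < cstar b d & cminus < cM] /\
       0 < tM /\ tM < tm /\
       (touches (Ppoly a b cm d) tm /\ local_min_pt (fun x => (Ppoly a b cm d).[x]) tm) /\
       (touches (Ppoly a b cM d) tM /\ local_max_pt (fun x => (Ppoly a b cM d).[x]) tM) /\
       (* as c increases from c_b, P touches the axis first at t_m (c = c_m),
          next at t_M (c = c_M), and nowhere else in between *)
       (forall c t : R, cb < c <= cM -> 0 < t -> touches (Ppoly a b c d) t ->
          (c = cm /\ t = tm) \/ (c = cM /\ t = tM)) /\
       (* (c1) *)
       (cminus <= cm ->
          (forall c : R, cm < c < cM -> n_equilibria a b c d 3) /\
          (n_equilibria a b cm d 2 /\ equilibrium a b cm d tm /\
           tangent_to_diag (phi a b cm d) tm /\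
           (forall t, equilibrium a b cm d t -> t <= tm)) /\
          (n_equilibria a b cM d 2 /\ equilibrium a b cM d tM /\
           tangent_to_diag (phi a b cM d) tM /\
           (forall t, equilibrium a b cM d t -> tM <= t)) /\
          (forall c : R, (cminus < c < cm) \/ (cM < c < cstar b d) ->
             n_equilibria a b c d 1)) /\
       (* (c2) *)
       (cm < cminus ->
          (forall c : R, cminus < c < cM -> n_equilibria a b c d 3) /\
          (n_equilibria a b cM d 2 /\ equilibrium a b cM d tM /\
           tangent_to_diag (phi a b cM d) tM /\
           (forall t, equilibrium a b cM d t -> tM <= t)) /\
          (forall c : R, cM < c < cstar b d -> n_equilibria a b c d 1))).
Proof.
move=> a_gt0 b_gt0 d_gt0 Q_cminus cminus_lt0 Hcb cb_lt0.
have -> : cb = crit a b (tstar a b).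
  by apply: (@Hf_neg_root_unique _ a b); rewrite ?Hf_crit_tstar ?crit_tstar_lt0.
split; [|split].
- move=> c _ -> ts; rewrite /ts -tstarE // Ppoly_deriv_hornerE Ppoly_deriv2_hornerE.
  by rewrite curv_tstar // subrr mulr0; split=> //; apply: tstar_gt0.
- by rewrite -slope_tstar_ge0 // => slope_ge0 c _; apply: one_equilibrium.
rewrite ltNge -slope_tstar_ge0 // -ltNge => slope_lt0.
have /andP[tM_gt0 tM_lt_tm] : 0 < tM a b d < tm a b d by apply: tM_gt0_lt_tm.
exists (ceq a b d (tm a b d)), (ceq a b d (tM a b d)), (tm a b d), (tM a b d).
split; first by split; [apply: crit_tstar_lt_cm | apply: cm_lt_cM |
                        apply: cM_lt_cstar | apply: Qf_root_lt_cM].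
split; first exact: tM_gt0.
split; first exact: tM_lt_tm.
split; first by split; [apply: touches_tm | apply: local_min_tm].
split; first by split; [apply: touches_tM | apply: local_max_tM].
split; first by move=> c t _; apply: touches_eq.
split=> [cminus_le|cm_lt_cminus].
  split; first by move=> c /andP[? ?]; apply: three_equilibria => //; apply/andP.
  split; first by apply: equilibria_at_cm.
  split; first by apply: equilibria_at_cM.
  by move=> c [/andP[_ ?]|/andP[? _]]; [apply: one_equilibrium_lt_cm | apply: one_equilibrium_gt_cM].
split; first by move=> c /andP[? ?]; apply: three_equilibria => //; rewrite (lt_trans cm_lt_cminus).
split; first by apply: equilibria_at_cM.
by move=> c /andP[? _]; apply: one_equilibrium_gt_cM.
Qed.
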